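(* Let $\mathbb{X}=\ell_p^2$ (the real space $\mathbb{R}^2$ with the $p$-norm), where $p\in\mathbb{N}$ and $p>2$. Let $T\in\mathbb{L}(\mathbb{X},\mathbb{X})$ be an isometry. Then there exists $\epsilon_0>0$ such that for every $0<\epsilon<\epsilon_0$, $T$ is the only uniform $\epsilon$-BPB approximation of $T$.
   Context: $S_{\mathbb{X}}$ is the unit sphere. For $T\in\mathbb{L}(\mathbb{X},\mathbb{X})$ with $\|T\|=1$ and fixed $\epsilon>0$, an operator $A\in\mathbb{L}(\mathbb{X},\mathbb{X})$ with $\|A\|=1$ is a uniform $\epsilon$-BPB approximation of $T$ if there exists $\delta(\epsilon)>0$ such that whenever $x_0\in S_{\mathbb{X}}$ satisfies $\|Tx_0\|>1-\delta(\epsilon)$, there exists $u_0\in S_{\mathbb{X}}$ with $\|Au_0\|=1$, $\|u_0-x_0\|<\epsilon$ and $\|A-T\|<\epsilon$. *)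

From Stdlib Require Import Reals.
Open Scope R_scope.

Definition vec := (R * R)%type.

Definition vsub (u v : vec) : vec := (fst u - fst v, snd u - snd v).

Definition pnorm (p : nat) (v : vec) : R :=
  let s := Rabs (fst v) ^ p + Rabs (snd v) ^ p in
  if Rlt_dec 0 s then Rpower s (/ INR p) else 0.

Record op := Op { m11 : R; m12 : R; m21 : R; m22 : R }.

Definition app (A : op) (v : vec) : vec :=
  (m11 A * fst v + m12 A * snd v, m21 A * fst v + m22 A * snd v).

Definition osub (A B : op) : op :=
  Op (m11 A - m11 B) (m12 A - m12 B) (m21 A - m21 B) (m22 A - m22 B).

Definition sphere (p : nat) (v : vec) : Prop := pnorm p v = 1.

Definition opnorm_is (p : nat) (A : op) (r : R) : Prop :=
  is_lub (fun t => exists v, sphere p v /\ t = pnorm p (app A v)) r.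

Definition isometry (p : nat) (T : op) : Prop :=
  forall v, pnorm p (app T v) = pnorm p v.

(* A is a uniform eps-BPB approximation of T (T assumed of norm 1). *)
Definition uniform_BPB_approx (p : nat) (eps : R) (T A : op) : Prop :=
  opnorm_is p A 1 /\
  exists delta, 0 < delta /\
    forall x0, sphere p x0 -> pnorm p (app T x0) > 1 - delta ->
      exists u0, sphere p u0 /\ pnorm p (app A u0) = 1 /\
        pnorm p (vsub u0 x0) < eps /\
        exists r, opnorm_is p (osub A T) r /\ r < eps.

From Stdlib Require Import Reals Lra Lia ClassicalEpsilon.
From Coquelicot Require Import Coquelicot.
Open Scope R_scope.

(* Write A = T B.  Since T is an isometry, ||A - T|| < eps makes B eps-close to the
   identity, and the BPB property gives, near every unit vector x0 = (1,t)/||(1,t)|| with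
   t in [1/2, 1], a unit vector u on which B preserves the norm.  The slope u2/u1 is then a
   root, 8 eps-close to t, of the degree-p polynomial (a + b t)^p + (c + d t)^p - 1 - t^p.
   For eps < 1/(32 p) these roots include p + 1 distinct ones, so the polynomial vanishes
   identically.  Its coefficients of degree 0, 1, p - 1 and p give a^p + c^p = 1,
   b a^(p-1) + d c^(p-1) = 0, a b^(p-1) + c d^(p-1) = 0 and b^p + d^p = 1, and for p > 2
   these force B = I as long as |b c| < a d. *)

Lemma pow_lt_compat_l (x y : R) (n : nat) : 0 <= x < y -> (0 < n)%nat -> x ^ n < y ^ n.
Proof.
  intros [Hx Hxy] Hn. destruct n as [|n]; [lia|]. clear Hn.
  induction n as [|n IH]; [simpl; lra|].
  change (x ^ S (S n)) with (x * x ^ S n). change (y ^ S (S n)) with (y * y ^ S n).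
  pose proof (pow_le x (S n) Hx). nra.
Qed.

Lemma pow_inj_nonneg (x y : R) (n : nat) :
  0 <= x -> 0 <= y -> (0 < n)%nat -> x ^ n = y ^ n -> x = y.
Proof.
  intros Hx Hy Hn E. destruct (Rtotal_order x y) as [H|[H|H]]; auto.
  - pose proof (pow_lt_compat_l x y n (conj Hx H) Hn). lra.
  - pose proof (pow_lt_compat_l y x n (conj Hy H) Hn). lra.
Qed.

Section PNorm.

Variable p : nat.
Hypothesis p_pos : (0 < p)%nat.

Lemma pnorm_nonneg v : 0 <= pnorm p v.
Proof. unfold pnorm. destruct (Rlt_dec _ _); [left; apply exp_pos | lra]. Qed.

Lemma pnorm_pow v : pnorm p v ^ p = Rabs (fst v) ^ p + Rabs (snd v) ^ p.
Proof.
  unfold pnorm; cbv zeta.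
  destruct (Rlt_dec 0 (Rabs (fst v) ^ p + Rabs (snd v) ^ p)) as [Hs|Hs].
  - rewrite <- Rpower_pow by apply exp_pos.
    rewrite Rpower_mult, Rinv_l by (apply not_0_INR; lia). apply Rpower_1, Hs.
  - pose proof (pow_le _ p (Rabs_pos (fst v))). pose proof (pow_le _ p (Rabs_pos (snd v))).
    rewrite pow_i by lia. lra.
Qed.

Lemma pnorm_unique v r :
  0 <= r -> r ^ p = Rabs (fst v) ^ p + Rabs (snd v) ^ p -> pnorm p v = r.
Proof.
  intros Hr E. apply (pow_inj_nonneg _ _ p); auto using pnorm_nonneg.
  rewrite pnorm_pow. auto.
Qed.

Lemma sphere_iff v : sphere p v <-> Rabs (fst v) ^ p + Rabs (snd v) ^ p = 1.
Proof.
  unfold sphere. split.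
  - intros E. rewrite <- pnorm_pow, E. apply pow1.
  - intros E. apply pnorm_unique; [lra|]. rewrite pow1. auto.
Qed.

Lemma pnorm_origin : pnorm p (0, 0) = 0.
Proof. apply pnorm_unique; [lra|]. simpl. rewrite Rabs_R0, pow_i by lia. ring. Qed.

Lemma Rabs_fst_le_pnorm v : Rabs (fst v) <= pnorm p v.
Proof.
  destruct (Rle_lt_dec (Rabs (fst v)) (pnorm p v)) as [H|H]; auto.
  pose proof (pow_lt_compat_l _ _ p (conj (pnorm_nonneg v) H) p_pos).
  pose proof (pow_le _ p (Rabs_pos (snd v))). rewrite pnorm_pow in *. lra.
Qed.

Lemma Rabs_snd_le_pnorm v : Rabs (snd v) <= pnorm p v.
Proof.
  destruct (Rle_lt_dec (Rabs (snd v)) (pnorm p v)) as [H|H]; auto.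
  pose proof (pow_lt_compat_l _ _ p (conj (pnorm_nonneg v) H) p_pos).
  pose proof (pow_le _ p (Rabs_pos (fst v))). rewrite pnorm_pow in *. lra.
Qed.

Lemma pnorm_eq0 v : pnorm p v = 0 -> v = (0, 0).
Proof.
  intros E. pose proof (Rabs_fst_le_pnorm v). pose proof (Rabs_snd_le_pnorm v).
  pose proof (Rabs_pos (fst v)). pose proof (Rabs_pos (snd v)).
  destruct v as [x y]; simpl in *. f_equal; apply Rabs_eq_0; lra.
Qed.

Lemma sphere_e1 : sphere p (1, 0).
Proof. apply sphere_iff. simpl. rewrite Rabs_R1, Rabs_R0, pow1, pow_i by lia. ring. Qed.

Lemma sphere_e2 : sphere p (0, 1).
Proof. apply sphere_iff. simpl. rewrite Rabs_R1, Rabs_R0, pow1, pow_i by lia. ring. Qed.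

Lemma opnorm_is_ub M r v : opnorm_is p M r -> sphere p v -> pnorm p (app M v) <= r.
Proof. intros [Hub _] Sv. apply Hub. exists v. auto. Qed.

Lemma opnorm_is_of_constant M r :
  (forall v, sphere p v -> pnorm p (app M v) = r) -> opnorm_is p M r.
Proof.
  intros HM. split.
  - intros x [v [Sv ->]]. rewrite HM by auto. lra.
  - intros b Hb. apply Hb. exists (1, 0).
    split; [apply sphere_e1|]. rewrite HM; auto using sphere_e1.
Qed.

Lemma pnorm_slope_bounds t : 0 <= t <= 1 -> 1 <= pnorm p (1, t) <= 2.
Proof.
  intros Ht. split.
  - pose proof (Rabs_fst_le_pnorm (1, t)). simpl in *. rewrite Rabs_R1 in *. lra.
  - destruct (Rle_lt_dec (pnorm p (1, t)) 2) as [H|H]; auto.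
    assert (H2 : 0 <= 2) by lra.
    pose proof (pow_lt_compat_l _ _ p (conj H2 H) p_pos).
    rewrite pnorm_pow in *. simpl in *. rewrite Rabs_R1, pow1, Rabs_pos_eq in * by lra.
    assert (t ^ p <= 1) by (rewrite <- (pow1 p); apply pow_incr; lra).
    assert (2 <= 2 ^ p) by (destruct p as [|q]; [lia|]; simpl; pose proof (pow_R1_Rle 2 q); lra).
    lra.
Qed.

Definition unit_slope (t : R) : vec := (/ pnorm p (1, t), t * / pnorm p (1, t)).

Lemma unit_slope_sphere t : 0 <= t <= 1 -> sphere p (unit_slope t).
Proof.
  intros Ht. pose proof (pnorm_slope_bounds t Ht) as Hn.
  pose proof (pnorm_pow (1, t)) as Hpow. simpl in Hpow.
  rewrite Rabs_R1, pow1, (Rabs_pos_eq t) in Hpow by lra.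
  apply sphere_iff. unfold unit_slope; simpl.
  assert (0 < / pnorm p (1, t)) by (apply Rinv_0_lt_compat; lra).
  rewrite !Rabs_pos_eq by nra.
  rewrite Rpow_mult_distr, pow_inv, Hpow.
  pose proof (pow_le t p ltac:(lra)). field. lra.
Qed.

End PNorm.

(* Polynomial functions of degree at most n, encoded through the factor theorem so that
   root counting is a plain induction on n. *)
Fixpoint is_poly (n : nat) (f : R -> R) : Prop :=
  match n with
  | O => exists c, forall t, f t = c
  | S m => forall r, exists g, is_poly m g /\ forall t, f t = f r + (t - r) * g t
  end.

Lemma is_poly_ext n f g : (forall t, f t = g t) -> is_poly n f -> is_poly n g.
Proof.
  destruct n as [|m]; simpl; intros E H.
  - destruct H as [c Hc]. exists c. intros t. rewrite <- E. auto.
  - intros r. destruct (H r) as [h [Hh Eh]]. exists h. split; auto.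
    intros t. rewrite <- !E. auto.
Qed.

Lemma is_poly_const n c : is_poly n (fun _ => c).
Proof.
  revert c. induction n as [|n IH]; simpl; intros c.
  - exists c; auto.
  - intros r. exists (fun _ => 0). split; [apply IH | intros; ring].
Qed.

Lemma is_poly_add n f g : is_poly n f -> is_poly n g -> is_poly n (fun t => f t + g t).
Proof.
  revert f g. induction n as [|n IH]; simpl; intros f g Hf Hg.
  - destruct Hf as [c Hc], Hg as [d Hd]. exists (c + d). intros. rewrite Hc, Hd. auto.
  - intros r. destruct (Hf r) as [f1 [Hf1 Ef]], (Hg r) as [g1 [Hg1 Eg]].
    exists (fun t => f1 t + g1 t). split; auto. intros t. rewrite (Ef t), (Eg t). ring.
Qed.

Lemma is_poly_scale n c f : is_poly n f -> is_poly n (fun t => c * f t).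
Proof.
  revert f. induction n as [|n IH]; simpl; intros f Hf.
  - destruct Hf as [d Hd]. exists (c * d). intros. rewrite Hd. auto.
  - intros r. destruct (Hf r) as [f1 [Hf1 Ef]].
    exists (fun t => c * f1 t). split; auto. intros t. rewrite (Ef t). ring.
Qed.

Lemma is_poly_mul_linear n a b f :
  is_poly n f -> is_poly (S n) (fun t => (a + b * t) * f t).
Proof.
  revert f. induction n as [|n IH]; intros f Hf.
  - destruct Hf as [c Hc]. intros r. exists (fun _ => b * c). split.
    + exists (b * c). auto.
    + intros t. rewrite !Hc. ring.
  - intros r. destruct (Hf r) as [f1 [Hf1 Ef]].
    exists (fun t => (a + b * t) * f1 t + b * f r). split.
    + apply is_poly_add; [apply IH, Hf1 | apply is_poly_const].
    + intros t. rewrite (Ef t). ring.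
Qed.

Lemma is_poly_pow_linear a b n : is_poly n (fun t => (a + b * t) ^ n).
Proof.
  induction n as [|n IH].
  - apply (is_poly_const 0 1).
  - apply is_poly_ext with (f := fun t => (a + b * t) * (a + b * t) ^ n).
    + intros t. simpl. ring.
    + apply is_poly_mul_linear, IH.
Qed.

Lemma is_poly_eq0_of_roots n f (r : nat -> R) : is_poly n f ->
  (forall i, (i <= n)%nat -> f (r i) = 0) ->
  (forall i j, (i <= n)%nat -> (j <= n)%nat -> i <> j -> r i <> r j) ->
  forall t, f t = 0.
Proof.
  revert f r. induction n as [|n IH]; intros f r Hf Hz Hd t.
  - destruct Hf as [c Hc]. rewrite Hc, <- (Hc (r 0%nat)). apply Hz. lia.
  - destruct (Hf (r 0%nat)) as [g [Hg Eg]].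
    assert (Hg0 : forall t, g t = 0).
    { apply (IH g (fun i => r (S i)) Hg).
      - intros i Hi. assert (Hri : r (S i) - r 0%nat <> 0).
        { intros E. apply (Hd (S i) 0%nat); lia || lra. }
        pose proof (Hz (S i) ltac:(lia)) as Z. rewrite Eg, (Hz 0%nat ltac:(lia)) in Z.
        destruct (Rmult_integral _ _ (eq_trans (eq_sym (Rplus_0_l _)) Z)); tauto.
      - intros i j Hi Hj Hij. apply Hd; lia. }
    rewrite Eg, Hg0, (Hz 0%nat ltac:(lia)). ring.
Qed.

(* The n + 1 grid points lo + k h / n are h / n apart, so roots within h / (2 n) of them
   are pairwise distinct. *)
Lemma is_poly_eq0_of_near_roots n f lo h : (0 < n)%nat -> 0 < h -> is_poly n f ->
  (forall t, lo <= t <= lo + h -> exists s, f s = 0 /\ Rabs (s - t) < h / (2 * INR n)) ->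
  forall t, f t = 0.
Proof.
  intros Hn Hh Hf Hnear.
  assert (HnR : 0 < INR n) by (apply lt_0_INR; lia).
  set (grid := fun k : nat => lo + INR k * (h / INR n)).
  assert (Hroot : forall k, exists s, (k <= n)%nat ->
                    f s = 0 /\ Rabs (s - grid k) < h / (2 * INR n)).
  { intros k. destruct (Compare_dec.le_dec k n) as [Hk|Hk]; [|exists 0; lia].
    destruct (Hnear (grid k)) as [s Hs]; [|exists s; auto].
    assert (0 <= INR k <= INR n) by (split; [apply pos_INR | apply le_INR, Hk]).
    assert (INR k * (h / INR n) <= h).
    { unfold Rdiv. rewrite <- Rmult_assoc. apply (Rmult_le_reg_r (INR n)); [lra|].
      rewrite Rmult_assoc, Rinv_l by lra. nra. }
    assert (0 <= INR k * (h / INR n)) by (apply Rmult_le_pos; [lra | apply Rdiv_le_0_compat; lra]).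
    unfold grid. lra. }
  destruct (choice _ Hroot) as [r Hr].
  assert (Hincr : forall i j, (j <= n)%nat -> (i < j)%nat -> r i < r j).
  { intros i j Hj Hij.
    destruct (Hr i ltac:(lia)) as [_ Ri], (Hr j Hj) as [_ Rj].
    apply Rabs_def2 in Ri. apply Rabs_def2 in Rj.
    assert (INR i + 1 <= INR j) by (rewrite <- S_INR; apply le_INR; lia).
    assert (Hstep : grid j - grid i = (INR j - INR i) * (2 * (h / (2 * INR n)))).
    { unfold grid. field. lra. }
    assert (0 < h / (2 * INR n)) by (apply Rdiv_lt_0_compat; lra).
    nra. }
  apply (is_poly_eq0_of_roots n f r Hf).
  - intros i Hi. apply (Hr i Hi).
  - intros i j Hi Hj Hij E. destruct (Nat.lt_gt_cases i j) as [[L|L] _]; auto.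
    + pose proof (Hincr i j Hj L). lra.
    + pose proof (Hincr j i Hi L). lra.
Qed.

(* ||B (1, t)||^p - ||(1, t)||^p for B = [[a, b], [c, d]], provided t, a + b t and c + d t
   are nonnegative. *)
Definition norm_defect (p : nat) (a b c d t : R) : R :=
  (a + b * t) ^ p + (c + d * t) ^ p - 1 - t ^ p.

Lemma norm_defect_is_poly p a b c d : is_poly p (norm_defect p a b c d).
Proof.
  apply is_poly_ext with (f := fun t => ((a + b * t) ^ p + (c + d * t) ^ p)
                                        + ((fun _ => -1) t + (-1) * (0 + 1 * t) ^ p)).
  - intros t. unfold norm_defect. replace (0 + 1 * t) with t by ring. ring.
  - apply is_poly_add; [apply is_poly_add; apply is_poly_pow_linear|].
    apply is_poly_add; [apply is_poly_const | apply is_poly_scale, is_poly_pow_linear].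
Qed.

Lemma norm_defect_at0 p a b c d : (0 < p)%nat -> norm_defect p a b c d 0 = a ^ p + c ^ p - 1.
Proof. intros Hp. unfold norm_defect. rewrite !Rmult_0_r, !Rplus_0_r, pow_i by lia. ring. Qed.

Lemma is_derive_norm_defect0 p a b c d : (1 < p)%nat ->
  is_derive (norm_defect p a b c d) 0 (INR p * (b * a ^ (p - 1) + d * c ^ (p - 1))).
Proof.
  intros Hp. unfold norm_defect. auto_derive; [trivial|].
  replace (Init.Nat.pred p) with (p - 1)%nat by lia.
  rewrite !Rmult_0_r, !Rplus_0_r, (pow_i (p - 1)) by lia. ring.
Qed.

Lemma norm_defect_eq0_coefficients p a b c d : (1 < p)%nat ->
  (forall t, norm_defect p a b c d t = 0) ->
  a ^ p + c ^ p = 1 /\ b * a ^ (p - 1) + d * c ^ (p - 1) = 0.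
Proof.
  intros Hp Hzero. split.
  - pose proof (Hzero 0) as Z. rewrite norm_defect_at0 in Z by lia. lra.
  - assert (D : is_derive (fun _ : R => 0) 0 (INR p * (b * a ^ (p - 1) + d * c ^ (p - 1)))).
    { eapply is_derive_ext; [|apply is_derive_norm_defect0, Hp]. auto. }
    apply is_derive_unique in D. rewrite Derive_const in D.
    assert (INR p <> 0) by (apply not_0_INR; lia).
    destruct (Rmult_integral _ _ (eq_sym D)); [contradiction | auto].
Qed.

Lemma norm_defect_reverse p a b c d s : s <> 0 ->
  norm_defect p b a d c s = s ^ p * norm_defect p a b c d (/ s).
Proof.
  intros Hs. unfold norm_defect.
  assert (E1 : (b + a * s) ^ p = s ^ p * (a + b * / s) ^ p)
    by (rewrite <- Rpow_mult_distr; f_equal; field; auto).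
  assert (E2 : (d + c * s) ^ p = s ^ p * (c + d * / s) ^ p)
    by (rewrite <- Rpow_mult_distr; f_equal; field; auto).
  assert (E3 : s ^ p * (/ s) ^ p = 1) by (rewrite <- Rpow_mult_distr, Rinv_r, pow1; auto).
  rewrite E1, E2.
  transitivity (s ^ p * (a + b * / s) ^ p + s ^ p * (c + d * / s) ^ p
                - s ^ p * (/ s) ^ p - s ^ p); [rewrite E3 | ]; ring.
Qed.

Lemma norm_defect_eq0_reverse p a b c d :
  (forall t, norm_defect p a b c d t = 0) -> forall s, norm_defect p b a d c s = 0.
Proof.
  intros Hzero.
  apply (is_poly_eq0_of_roots p _ (fun i => INR (S i)) (norm_defect_is_poly _ _ _ _ _)).
  - intros i _. rewrite norm_defect_reverse, Hzero by (apply not_0_INR; lia). ring.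
  - intros i j _ _ Hij E. apply INR_eq in E. lia.
Qed.

(* Multiplying the two middle equations gives |b c| (a d)^(p-1) = a d |b c|^(p-1), which
   for p > 2 and |b c| < a d leaves only b c = 0. *)
Lemma coefficient_system_identity p a b c d : (2 < p)%nat ->
  0 < a -> 0 < d -> Rabs b * Rabs c < a * d ->
  a ^ p + c ^ p = 1 -> b ^ p + d ^ p = 1 ->
  b * a ^ (p - 1) + d * c ^ (p - 1) = 0 -> a * b ^ (p - 1) + c * d ^ (p - 1) = 0 ->
  a = 1 /\ b = 0 /\ c = 0 /\ d = 1.
Proof.
  intros Hp Ha Hd Hbc E1 E2 E3 E4.
  assert (Hpa : 0 < a ^ (p - 1)) by (apply pow_lt, Ha).
  assert (Hpd : 0 < d ^ (p - 1)) by (apply pow_lt, Hd).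
  assert (F3 : Rabs b * a ^ (p - 1) = d * Rabs c ^ (p - 1)).
  { rewrite RPow_abs, <- (Rabs_pos_eq (a ^ (p - 1))), <- (Rabs_pos_eq d) by lra.
    rewrite <- !Rabs_mult, <- Rabs_Ropp. f_equal. lra. }
  assert (F4 : Rabs c * d ^ (p - 1) = a * Rabs b ^ (p - 1)).
  { rewrite RPow_abs, <- (Rabs_pos_eq (d ^ (p - 1))), <- (Rabs_pos_eq a) by lra.
    rewrite <- !Rabs_mult, <- Rabs_Ropp. f_equal. lra. }
  assert (Hbc0 : Rabs b * Rabs c = 0).
  { set (x := Rabs b * Rabs c) in *. set (y := a * d) in *.
    assert (Hx : 0 <= x) by (apply Rmult_le_pos; apply Rabs_pos).
    destruct Hx as [Hx|Hx]; auto. exfalso.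
    replace (p - 1)%nat with (S (p - 2)) in F3, F4 by lia.
    assert (Hxy : x * y * x ^ (p - 2) = x * y * y ^ (p - 2)).
    { unfold x, y. rewrite !Rpow_mult_distr.
      transitivity ((d * Rabs c ^ S (p - 2)) * (a * Rabs b ^ S (p - 2))); [simpl; ring|].
      rewrite <- F3, <- F4. simpl. ring. }
    apply Rmult_eq_reg_l in Hxy; [|nra].
    pose proof (pow_lt_compat_l x y (p - 2) (conj (Rlt_le _ _ Hx) Hbc) ltac:(lia)). lra. }
  assert (Hb0 : b = 0 /\ c = 0).
  { destruct (Rmult_integral _ _ Hbc0) as [Z|Z]; apply Rabs_eq_0 in Z; subst.
    - rewrite pow_i in E4 by lia. split; auto. nra.
    - rewrite pow_i in E3 by lia. split; auto. nra. }
  destruct Hb0 as [-> ->]. rewrite pow_i in E1, E2 by lia.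
  repeat split; auto; apply (pow_inj_nonneg _ _ p); lia || lra || (rewrite pow1; lra).
Qed.

Lemma norm_defect_eq0_identity p a b c d : (2 < p)%nat ->
  0 < a -> 0 < d -> Rabs b * Rabs c < a * d ->
  (forall t, norm_defect p a b c d t = 0) -> a = 1 /\ b = 0 /\ c = 0 /\ d = 1.
Proof.
  intros Hp Ha Hd Hbc Hzero.
  destruct (norm_defect_eq0_coefficients p a b c d ltac:(lia) Hzero) as [E1 E3].
  destruct (norm_defect_eq0_coefficients p b a d c ltac:(lia)
              (norm_defect_eq0_reverse p a b c d Hzero)) as [E2 E4].
  apply coefficient_system_identity with p; auto.
Qed.

Lemma norm_defect_slope_root p a b c d x y : 0 < x -> 0 < y ->
  0 < a * x + b * y -> 0 < c * x + d * y ->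
  Rabs (a * x + b * y) ^ p + Rabs (c * x + d * y) ^ p = Rabs x ^ p + Rabs y ^ p ->
  norm_defect p a b c d (y / x) = 0.
Proof.
  intros Hx Hy H1 H2 E. rewrite !Rabs_pos_eq in E by lra.
  replace (a * x + b * y) with (x * (a + b * (y / x))) in E by (field; lra).
  replace (c * x + d * y) with (x * (c + d * (y / x))) in E by (field; lra).
  replace y with (x * (y / x)) in E at 3 by (field; lra).
  rewrite !Rpow_mult_distr in E.
  apply (Rmult_eq_reg_l (x ^ p)); [|apply pow_nonzero; lra].
  unfold norm_defect. lra.
Qed.

Lemma slope_estimate u1 u2 al t eps : 1 / 2 <= al <= 1 -> 1 / 2 <= t <= 1 -> eps < 1 / 8 ->
  Rabs (u1 - al) < eps -> Rabs (u2 - t * al) < eps ->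
  1 / 4 < u1 /\ 1 / 8 < u2 /\ Rabs (u2 / u1 - t) < 8 * eps.
Proof.
  intros Hal Ht Heps H1 H2. apply Rabs_def2 in H1. apply Rabs_def2 in H2.
  assert (Hu1 : 1 / 4 < u1) by lra.
  assert (Hw : Rabs (u2 - t * u1) < 2 * eps) by (apply Rabs_def1; nra).
  repeat split; [lra | nra |].
  replace (u2 / u1 - t) with ((u2 - t * u1) / u1) by (field; lra).
  unfold Rdiv. rewrite Rabs_mult, Rabs_inv, (Rabs_pos_eq u1) by lra.
  apply (Rmult_lt_reg_r u1); [lra|]. rewrite Rmult_assoc, Rinv_l by lra. nra.
Qed.

Definition ocomp (A B : op) : op :=
  Op (m11 A * m11 B + m12 A * m21 B) (m11 A * m12 B + m12 A * m22 B)
     (m21 A * m11 B + m22 A * m21 B) (m21 A * m12 B + m22 A * m22 B).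

Lemma app_ocomp A B v : app (ocomp A B) v = app A (app B v).
Proof. unfold app, ocomp; simpl. f_equal; ring. Qed.

Lemma app_osub A B v : app (osub A B) v = vsub (app A v) (app B v).
Proof. unfold app, osub, vsub; simpl. f_equal; ring. Qed.

Lemma app_vsub A u v : app A (vsub u v) = vsub (app A u) (app A v).
Proof. unfold app, vsub; simpl. f_equal; ring. Qed.

Lemma ocomp_id_r A : ocomp A (Op 1 0 0 1) = A.
Proof. destruct A. unfold ocomp; simpl. f_equal; ring. Qed.

Definition near_id (eps : R) (B : op) : Prop :=
  Rabs (m11 B - 1) < eps /\ Rabs (m12 B) < eps /\ Rabs (m21 B) < eps /\ Rabs (m22 B - 1) < eps.

Section Isometry.

Variable p : nat.
Hypothesis p_pos : (0 < p)%nat.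
Variable T : op.
Hypothesis T_iso : isometry p T.

Lemma isometry_injective v : app T v = (0, 0) -> v = (0, 0).
Proof. intros E. apply (pnorm_eq0 p p_pos). rewrite <- T_iso, E. apply pnorm_origin, p_pos. Qed.

Lemma isometry_det_neq0 : m11 T * m22 T - m12 T * m21 T <> 0.
Proof.
  intros Hdet.
  assert (K1 : (m22 T, - m21 T) = (0, 0))
    by (apply isometry_injective; unfold app; simpl; f_equal; lra).
  assert (K2 : (m12 T, - m11 T) = (0, 0))
    by (apply isometry_injective; unfold app; simpl; f_equal; lra).
  injection K1 as E22 E21. injection K2 as E12 E11.
  assert (K : (1, 0) = (0, 0)).
  { apply isometry_injective. unfold app; simpl. f_equal; nra. }
  injection K. lra.
Qed.

Lemma isometry_factor A : exists B, A = ocomp T B.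
Proof.
  pose proof isometry_det_neq0 as Hdet.
  set (D := m11 T * m22 T - m12 T * m21 T) in Hdet.
  exists (Op ((m22 T * m11 A - m12 T * m21 A) / D) ((m22 T * m12 A - m12 T * m22 A) / D)
             ((m11 T * m21 A - m21 T * m11 A) / D) ((m11 T * m22 A - m21 T * m12 A) / D)).
  destruct A. unfold ocomp, D in *; simpl. f_equal; field; auto.
Qed.

Lemma pnorm_app_ocomp B v : pnorm p (app (ocomp T B) v) = pnorm p (app B v).
Proof. rewrite app_ocomp. apply T_iso. Qed.

Lemma pnorm_app_osub_ocomp B v :
  pnorm p (app (osub (ocomp T B) T) v) = pnorm p (vsub (app B v) v).
Proof. rewrite app_osub, app_ocomp, <- app_vsub. apply T_iso. Qed.

Lemma uniform_BPB_approx_refl eps : 0 < eps -> uniform_BPB_approx p eps T T.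
Proof.
  intros Heps. split.
  - apply opnorm_is_of_constant; auto. intros v Sv. rewrite T_iso. apply Sv.
  - exists 1. split; [lra|]. intros x0 Sx0 _. exists x0.
    repeat split; auto; [rewrite T_iso; apply Sx0 | |].
    + replace (vsub x0 x0) with (0, 0) by (unfold vsub; f_equal; ring).
      rewrite pnorm_origin; auto.
    + exists 0. split; auto. apply opnorm_is_of_constant; auto. intros v _.
      replace (app (osub T T) v) with (0, 0) by (unfold app, osub; simpl; f_equal; ring).
      apply pnorm_origin, p_pos.
Qed.

Lemma BPB_near_id eps B : uniform_BPB_approx p eps T (ocomp T B) -> near_id eps B.
Proof.
  intros [_ [delta [Hdelta HBPB]]].
  destruct (HBPB (1, 0) (sphere_e1 p p_pos)) as [_ [_ [_ [_ [r [Hr Hre]]]]]].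
  { rewrite T_iso, (sphere_e1 p p_pos). lra. }
  assert (Hcol : forall v, sphere p v ->
            Rabs (fst (vsub (app B v) v)) < eps /\ Rabs (snd (vsub (app B v) v)) < eps).
  { intros v Sv. pose proof (opnorm_is_ub p _ _ v Hr Sv) as Hv.
    rewrite pnorm_app_osub_ocomp in Hv.
    pose proof (Rabs_fst_le_pnorm p p_pos (vsub (app B v) v)).
    pose proof (Rabs_snd_le_pnorm p p_pos (vsub (app B v) v)). lra. }
  destruct (Hcol (1, 0) (sphere_e1 p p_pos)) as [H11 H21].
  destruct (Hcol (0, 1) (sphere_e2 p p_pos)) as [H12 H22].
  unfold app, vsub in *; simpl in *.
  repeat rewrite ?Rmult_1_r, ?Rmult_0_r, ?Rplus_0_r, ?Rplus_0_l, ?Rminus_0_r in *.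
  repeat split; auto.
Qed.

Lemma BPB_slope_roots eps B : eps < 1 / 16 ->
  uniform_BPB_approx p eps T (ocomp T B) -> near_id eps B ->
  forall t, 1 / 2 <= t <= 1 ->
  exists s, norm_defect p (m11 B) (m12 B) (m21 B) (m22 B) s = 0 /\ Rabs (s - t) < 8 * eps.
Proof.
  intros Heps [_ [delta [Hdelta HBPB]]] [Ha [Hb [Hc Hd]]] t Ht.
  pose proof (pnorm_slope_bounds p p_pos t ltac:(lra)) as Hn.
  pose proof (unit_slope_sphere p p_pos t ltac:(lra)) as Sx.
  destruct (HBPB _ Sx) as [[u1 u2] [Su [Au [Hu _]]]]; [rewrite T_iso, Sx; lra|].
  rewrite pnorm_app_ocomp in Au.
  assert (Hal : 1 / 2 <= / pnorm p (1, t) <= 1).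
  { split.
    - replace (1 / 2) with (/ 2) by field. apply Rinv_le_contravar; lra.
    - rewrite <- Rinv_1 at 2. apply Rinv_le_contravar; lra. }
  pose proof (Rabs_fst_le_pnorm p p_pos (vsub (u1, u2) (unit_slope p t))) as U1.
  pose proof (Rabs_snd_le_pnorm p p_pos (vsub (u1, u2) (unit_slope p t))) as U2.
  pose proof (Rabs_fst_le_pnorm p p_pos (u1, u2)) as Hu1_le.
  pose proof (Rabs_snd_le_pnorm p p_pos (u1, u2)) as Hu2_le.
  unfold unit_slope, vsub, sphere in *. cbn [fst snd] in *.
  destruct (slope_estimate u1 u2 _ t eps Hal Ht ltac:(lra) ltac:(lra) ltac:(lra))
    as [Hu1 [Hu2 Hslope]].
  exists (u2 / u1). split; [|exact Hslope].
  apply Rabs_def2 in Ha, Hb, Hc, Hd. rewrite Su, Rabs_pos_eq in Hu1_le, Hu2_le by lra.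
  apply norm_defect_slope_root; try nra.
  apply (sphere_iff p p_pos) in Su. apply (sphere_iff p p_pos) in Au.
  unfold app in Au; simpl in *. lra.
Qed.

End Isometry.

Theorem theorem2p9 (p : nat) (hp : (2 < p)%nat) (T : op) (hT : isometry p T) :
  exists eps0, 0 < eps0 /\
    forall eps, 0 < eps -> eps < eps0 ->
      forall A : op, uniform_BPB_approx p eps T A <-> A = T.
Proof.
  assert (Hp : (0 < p)%nat) by lia.
  assert (HpR : 3 <= INR p) by (replace 3 with (INR 3) by (simpl; ring); apply le_INR; lia).
  exists (/ (32 * INR p)). split; [apply Rinv_0_lt_compat; lra|].
  intros eps He He0 A. split; [|intros ->; apply uniform_BPB_approx_refl; auto].
  intros HA. destruct (isometry_factor p Hp T hT A) as [B ->].
  assert (Heps : eps < 1 / 16).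
  { assert (/ (32 * INR p) <= / (32 * 3)) by (apply Rinv_le_contravar; lra). lra. }
  pose proof (BPB_near_id p Hp T hT eps B HA) as Hid.
  assert (Hzero : forall t, norm_defect p (m11 B) (m12 B) (m21 B) (m22 B) t = 0).
  { apply (is_poly_eq0_of_near_roots p _ (1 / 2) (1 / 2) Hp ltac:(lra)
             (norm_defect_is_poly _ _ _ _ _)).
    intros t Ht.
    destruct (BPB_slope_roots p Hp T hT eps B Heps HA Hid t ltac:(lra)) as [s [Hs Hst]].
    exists s. split; auto.
    replace (1 / 2 / (2 * INR p)) with (8 * / (32 * INR p)) by (field; lra). lra. }
  destruct Hid as [Ha [Hb [Hc Hd]]]. apply Rabs_def2 in Ha, Hd.
  assert (Hbc : Rabs (m12 B) * Rabs (m21 B) < m11 B * m22 B).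
  { apply Rlt_trans with (eps * eps); [apply Rmult_le_0_lt_compat; auto using Rabs_pos | nra]. }
  destruct (norm_defect_eq0_identity p (m11 B) (m12 B) (m21 B) (m22 B) hp
              ltac:(lra) ltac:(lra) Hbc Hzero)
    as [E11 [E12 [E21 E22]]].
  destruct B; simpl in *; subst. apply ocomp_id_r.
Qed.
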